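(* Let $C,D\subseteq[n]\times[n]$ be diagrams and $k,l\in[n]$. If $\widehat{C}\le\widehat{D}$, then $\widehat{C}_{\mathrm{aug}}\le D$. In particular, every diagram $C'\le\widehat{D}$ with no boxes in row $k$ can be obtained from some diagram $C\le D$ by removing any boxes in row $k$ or column $l$ from $C$.
   Context: A diagram $D\subseteq[n]\times[n]$ is a set of boxes $(i,j)$ (row $i$, column $j$), identified with its column sequence $(D_1,\dots,D_n)$, $D_j=\{i:(i,j)\in D\}$. For $R,S\subseteq[n]$, $R\le S$ means $\#R=\#S$ and the $k$-th smallest element of $R$ is at most the $k$-th smallest element of $S$ for each $k$; for diagrams $C\le D$ means $C_j\le D_j$ for all $j$. For fixed $k,l$, $\widehat{C}$ and $\widehat{D}$ denote the diagrams obtained from $C$ and $D$ by removing all boxes in row $k$ or column $l$. For a diagram $\widehat{C}$ (with $D$ fixed), $\widehat{C}_{\mathrm{aug}}=\widehat{C}\cup\{(k,i):(k,i)\in D\}\cup\{(i,l):(i,l)\in D\}$. *)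

From mathcomp Require Import all_boot.
Set Implicit Arguments. Unset Strict Implicit. Unset Printing Implicit Defensive.

(* A diagram in [n] x [n]: a set of boxes (i, j) = (row, column), indices 'I_n. *)
Definition diagram (n : nat) := {set 'I_n * 'I_n}.

Definition dcol n (D : diagram n) (j : 'I_n) : {set 'I_n} :=
  [set i | (i, j) \in D].

Definition sorted_elems n (R : {set 'I_n}) : seq nat :=
  sort leq [seq val i | i <- enum R].

Definition setle n (R S : {set 'I_n}) : Prop :=
  #|R| = #|S| /\
  forall m, m < #|R| -> nth 0 (sorted_elems R) m <= nth 0 (sorted_elems S) m.

Definition dle n (C D : diagram n) : Prop :=
  forall j : 'I_n, setle (dcol C j) (dcol D j).

Definition hat n (k l : 'I_n) (C : diagram n) : diagram n :=
  [set b in C | (b.1 != k) && (b.2 != l)].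

Definition aug n (k l : 'I_n) (D Chat : diagram n) : diagram n :=
  Chat :|: [set b in D | b.1 == k] :|: [set b in D | b.2 == l].

From mathcomp Require Import all_boot.
Set Implicit Arguments. Unset Strict Implicit.

(* Compare sets through their counting functions: R <= S iff #|R| = #|S| and,
   for every t, S has at most as many elements <= t as R.  Adding a common new
   element k to R and S shifts both counting functions by the same amount, so
   it preserves <=.  Column l of the augmentation is column l of D; any other
   column j of the augmentation is the hatted column of C, plus k exactly when
   (k, j) is in D, just as D_j is its hatted column plus k in that case.  For
   the second claim, column l of D-hat is empty, so C' avoids column l as well
   as row k; then C := C'_aug works. *)

Lemma sorted_nth_leq_count (s : seq nat) t i : sorted leq s -> i < size s ->
  (nth 0 s i <= t) = (i < count (leq^~ t) s).
Proof.
elim: s i => [|x s IH] i //= s_sorted i_lt.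
have x_min : all (leq x) s := order_path_min leq_trans s_sorted.
have count_gt : t < x -> count (leq^~ t) s = 0.
  move=> t_lt_x; rewrite (@eq_in_count _ _ pred0) ?count_pred0 //.
  by move=> y /(allP x_min) xy /=; rewrite leqNgt (leq_trans t_lt_x xy).
have s_sorted' := path_sorted s_sorted.
case: i i_lt => [|i] i_lt /=; case: (leqP x t) => [x_le|t_lt].
- by rewrite add1n.
- by rewrite add0n count_gt.
- by rewrite add1n ltnS IH.
- by rewrite add0n IH // count_gt.
Qed.

Lemma sorted_nth_leq_iff_count (r s : seq nat) :
  sorted leq r -> sorted leq s -> size r = size s ->
  (forall i, i < size r -> nth 0 r i <= nth 0 s i) <->
  (forall t, count (leq^~ t) s <= count (leq^~ t) r).
Proof.
move=> r_sorted s_sorted eq_size; split=> [le_nth t | le_count i i_lt].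
- case count_s: (count (leq^~ t) s) => [|c] //.
  have c_lt : c < size s by rewrite -count_s count_size.
  have s_c : nth 0 s c <= t by rewrite sorted_nth_leq_count // count_s.
  have r_c : nth 0 r c <= t by apply: leq_trans s_c; apply: le_nth; rewrite eq_size.
  by rewrite sorted_nth_leq_count ?eq_size in r_c.
- have s_i : i < count (leq^~ (nth 0 s i)) s by rewrite -sorted_nth_leq_count -?eq_size.
  by rewrite sorted_nth_leq_count //; apply: leq_trans s_i (le_count _).
Qed.

Definition card_le n (R : {set 'I_n}) t := #|[set x in R | x <= t]|.

Lemma count_sorted_elems n (R : {set 'I_n}) t :
  count (leq^~ t) (sorted_elems R) = card_le R t.
Proof.
rewrite /sorted_elems count_sort count_map /card_le setIdE cardE.
rewrite (perm_size (enum_setI _ _)) size_filter.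
by apply: eq_count => x /=; rewrite inE.
Qed.

Lemma setleP n (R S : {set 'I_n}) :
  setle R S <-> #|R| = #|S| /\ forall t, card_le S t <= card_le R t.
Proof.
have size_elems (X : {set 'I_n}) : size (sorted_elems X) = #|X|.
  by rewrite size_sort size_map cardE.
have elems_sorted (X : {set 'I_n}) : sorted leq (sorted_elems X).
  exact/sort_sorted/leq_total.
rewrite /setle; split=> -[eq_card le]; split=> //;
  have := sorted_nth_leq_iff_count (elems_sorted R) (elems_sorted S);
  rewrite !size_elems => /(_ eq_card) [to_count of_count].
- by move=> t; rewrite -!count_sorted_elems; apply: to_count.
- by apply: of_count => t; rewrite !count_sorted_elems.
Qed.

Lemma setI1 (T : finType) (A : {set T}) x :
  A :&: [set x] = if x \in A then [set x] else set0.
Proof.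
apply/setP => y; rewrite !inE; case: (eqVneq y x) => [->|yx];
  by case: ifP; rewrite ?inE ?eqxx ?(negPf yx) ?andbF ?andbT.
Qed.

Lemma card_leU1 n (R : {set 'I_n}) k t : k \notin R ->
  card_le (k |: R) t = (k <= t) + card_le R t.
Proof.
move=> kNR; rewrite /card_le !setIdE setIUl setIC setI1 inE.
by case: ifP => _; rewrite ?set0U // cardsU1 inE (negPf kNR).
Qed.

Lemma setleU1 n (R S : {set 'I_n}) k : k \notin R -> k \notin S ->
  setle R S -> setle (k |: R) (k |: S).
Proof.
move=> kNR kNS /setleP [eq_card le]; apply/setleP; split.
  by rewrite !cardsU1 kNR kNS eq_card.
by move=> t; rewrite !card_leU1 // leq_add2l.
Qed.

Lemma setleU_setI1 n (R S T : {set 'I_n}) k : k \notin R -> k \notin S ->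
  setle R S -> setle (R :|: T :&: [set k]) (S :|: T :&: [set k]).
Proof.
move=> kNR kNS le_RS; rewrite setI1; case: ifP => _; last by rewrite !setU0.
by rewrite !(setUC _ [set k]); apply: setleU1.
Qed.

Section HatAug.

Variables (n : nat) (k l : 'I_n).

Lemma dcol_hat (C : diagram n) j :
  dcol (hat k l C) j = if j == l then set0 else dcol C j :\ k.
Proof.
apply/setP => i; case: (eqVneq j l) => [->|jl]; rewrite !inE /= ?eqxx ?andbF //.
by rewrite jl andbT andbC.
Qed.

Lemma dcol_aug (D X : diagram n) j :
  dcol (aug k l D X) j =
  dcol X j :|: (if j == l then dcol D j else dcol D j :&: [set k]).
Proof.
apply/setP => i; case: (eqVneq j l) => [->|jl]; rewrite !inE /= ?eqxx ?andbT.
  by case: ((i, l) \in D); rewrite ?orbT ?orbF.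
by rewrite (negPf jl) andbF orbF.
Qed.

Lemma hat_aug (D X : diagram n) : hat k l (aug k l D X) = hat k l X.
Proof.
apply/setP => -[i j]; rewrite !inE /=.
by case: eqP; case: eqP; rewrite ?andbF ?andbT ?orbF.
Qed.

Lemma hat_id (X : diagram n) :
  (forall j, (k, j) \notin X) -> (forall i, (i, l) \notin X) -> hat k l X = X.
Proof.
move=> rowNX colNX; apply/setP => -[i j]; rewrite inE /=.
case: eqP => [->|_]; first by rewrite (negPf (rowNX j)).
by case: eqP => [->|_]; rewrite ?(negPf (colNX i)) ?andbT.
Qed.

Lemma dle_aug_hat (C D : diagram n) :
  dle (hat k l C) (hat k l D) -> dle (aug k l D (hat k l C)) D.
Proof.
move=> le_hat j; have := le_hat j; rewrite dcol_aug !dcol_hat.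
case: eqP => [_ _ | _ le_j]; first by rewrite set0U.
rewrite -[X in setle _ X](setID (dcol D j) [set k]) [X in setle _ X]setUC.
by apply: setleU_setI1; rewrite ?setD11.
Qed.

Lemma dle_hat_notin_col (C D : diagram n) i :
  dle C (hat k l D) -> (i, l) \notin C.
Proof.
move=> /(_ l) [+ _]; rewrite dcol_hat eqxx cards0 => /cards0_eq /setP /(_ i).
by rewrite !inE => ->.
Qed.

End HatAug.

Theorem lemma5p6 (n : nat) (k l : 'I_n) :
  (forall C D : diagram n,
      dle (hat k l C) (hat k l D) -> dle (aug k l D (hat k l C)) D) /\
  (forall D C' : diagram n,
      dle C' (hat k l D) -> (forall j : 'I_n, (k, j) \notin C') ->
      exists C : diagram n, dle C D /\ hat k l C = C').
Proof.
split=> [|D C' le_C' rowNC']; first exact: dle_aug_hat.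
have hatC' : hat k l C' = C'.
  by apply: hat_id => // i; apply: dle_hat_notin_col le_C'.
exists (aug k l D C'); rewrite hat_aug hatC'; split=> //.
by rewrite -{1}hatC'; apply: dle_aug_hat; rewrite hatC'.
Qed.
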